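(* Let $n\ge 1$ and let $t_1,\dots,t_n$ be formal variables, with $\bar t_i:=t_i^{-1}$. Let $b=\prod_{\alpha=1}^k\sigma_{i_\alpha}^{s_\alpha}$ be a braid in the braid group $B_n$, written as a word in the standard generators $\sigma_1,\dots,\sigma_{n-1}$ with signs $s_\alpha\in\{+1,-1\}$ (product taken from left to right, i.e. from the bottom of the braid to the top). Let $\tau=[\tau 1,\dots,\tau n]$ be the permutation induced by $b$ (as defined in the context), let $\gamma=\Gamma(b)$ be the Gassner invariant of $b$, and let $\iota=[1,2,\dots,n]$ be the identity permutation. Then $$\Omega(\tau)\,\gamma^{-1}=\bar{\gamma}^T\,\Omega(\iota),\qquad\text{equivalently}\qquad \gamma^{-1}=\Omega(\tau)^{-1}\,\bar\gamma^T\,\Omega(\iota),$$ where $\bar\gamma$ is obtained from $\gamma$ by the substitution $t_i\mapsto t_i^{-1}$ for all $i$, and $\bar\gamma^T$ is its transpose.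
   Context: The braid group $B_n$ has generators $\sigma_1,\dots,\sigma_{n-1}$ and relations $\sigma_i\sigma_j=\sigma_j\sigma_i$ for $|i-j|>1$ and $\sigma_i\sigma_{i+1}\sigma_i=\sigma_{i+1}\sigma_i\sigma_{i+1}$. Strands are indexed $1,\dots,n$ at the bottom of the braid. Reading the word $b=\prod_{\alpha=1}^k\sigma_{i_\alpha}^{s_\alpha}$ from left to right (bottom to top), track which strand occupies each position: initially position $p$ holds strand $p$; the letter $\sigma_{i}^{\pm1}$ is a crossing of the strands at positions $i$ and $i+1$ (as counted just below that crossing), after which these two strands swap positions. For crossing number $\alpha$, let $j_\alpha$ be the index of the over strand: it is the strand at position $i_\alpha$ just below the crossing if $s_\alpha=+1$, and the strand at position $i_\alpha+1$ just below the crossing if $s_\alpha=-1$. The induced permutation $\tau=[\tau1,\dots,\tau n]$ is defined by: after all $k$ crossings (at the top of the braid), position $p$ holds strand $\tau p$. For a variable $t$ and $1\le i\le n-1$, $U_i(t)$ is the $n\times n$ identity matrix with its $2\times2$ block in rows and columns $i,i+1$ replaced by $\begin{pmatrix}1-t&1\\ t&0\end{pmatrix}$; its inverse $U_i^{-1}(t)$ is the identity matrix with that block replaced by $\begin{pmatrix}0&t^{-1}\\ 1&1-t^{-1}\end{pmatrix}$. The Gassner invariant of $b$ is the matrix $\Gamma(b):=\prod_{\alpha=1}^k U_{i_\alpha}^{s_\alpha}(t_{j_\alpha})$ (product from left to right), with entries Laurent polynomials in $t_1,\dots,t_n$ over $\mathbb Z$. For a permutation $\tau=[\tau1,\dots,\tau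 n]$ of $1,\dots,n$, $\Omega(\tau)$ is the lower-triangular $n\times n$ matrix whose diagonal entries are $\Omega(\tau)_{pp}=(1-t_{\tau p})^{-1}$, whose entries below the diagonal are all $1$, and whose entries above the diagonal are all $0$. *)

From mathcomp Require Import all_boot all_order all_algebra.
Set Implicit Arguments. Unset Strict Implicit. Unset Printing Implicit Defensive.
Import GRing.Theory.
Local Open Scope ring_scope.

(* A braid word: a list of letters (i, s) standing for sigma_i^{s},
   with i 1-based and s = true meaning +1, s = false meaning -1.
   The word is read left to right (bottom to top). *)
Definition braid_word := seq (nat * bool).

Definition valid_word (n : nat) (w : braid_word) : bool :=
  all (fun l => (0 < l.1 < n)%N) w.

(* Position state: p (1-based position) |-> strand (1-based) at position p. *)
Definition swap_pos (st : nat -> nat) (i : nat) : nat -> nat :=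
  fun p => if p == i then st i.+1 else if p == i.+1 then st i else st p.

(* Induced permutation tau: after all crossings, position p holds strand tau p. *)
Fixpoint induced_perm_aux (st : nat -> nat) (w : braid_word) : nat -> nat :=
  match w with
  | [::] => st
  | (i, _) :: w' => induced_perm_aux (swap_pos st i) w'
  end.
Definition induced_perm (w : braid_word) : nat -> nat := induced_perm_aux id w.

Section Gassner.
Variables (F : fieldType) (n : nat).

(* U_i(x): identity with block [[1-x, 1],[x, 0]] in rows/cols i, i+1 (1-based);
   matrix indices r : 'I_n are 0-based, so row i corresponds to val r = i-1. *)
Definition Umx (i : nat) (x : F) : 'M[F]_n :=
  \matrix_(r, c)
    if (r.+1 == i) && (c.+1 == i) then 1 - x
    else if (r.+1 == i) && (c.+1 == i.+1) then 1
    else if (r.+1 == i.+1) && (c.+1 == i) then x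
    else if (r.+1 == i.+1) && (c.+1 == i.+1) then 0
    else (r == c)%:R.

Definition Uinvmx (i : nat) (x : F) : 'M[F]_n :=
  \matrix_(r, c)
    if (r.+1 == i) && (c.+1 == i) then 0
    else if (r.+1 == i) && (c.+1 == i.+1) then x^-1
    else if (r.+1 == i.+1) && (c.+1 == i) then 1
    else if (r.+1 == i.+1) && (c.+1 == i.+1) then 1 - x^-1
    else (r == c)%:R.

(* The over
   strand of sigma_i^{+1} is the strand at position i, of sigma_i^{-1} the
   strand at position i+1 (just below the crossing). *)
Fixpoint gassner_aux (t : nat -> F) (st : nat -> nat) (w : braid_word) : 'M[F]_n :=
  match w with
  | [::] => 1%:M
  | (i, s) :: w' =>
      (if s then Umx i (t (st i)) else Uinvmx i (t (st i.+1)))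
        *m gassner_aux t (swap_pos st i) w'
  end.
Definition gassner (t : nat -> F) (w : braid_word) : 'M[F]_n := gassner_aux t id w.

Definition Omega (t : nat -> F) (tau : nat -> nat) : 'M[F]_n :=
  \matrix_(r, c)
    if r == c then (1 - t (tau r.+1))^-1
    else if (c < r)%N then 1 else 0.

End Gassner.

From mathcomp Require Import all_boot all_order all_algebra zify ring.
Import GRing.Theory.
Local Open Scope ring_scope.
Set Implicit Arguments. Unset Strict Implicit. Unset Printing Implicit Defensive.

(** Each generator matrix is unitary for the Hermitian form [Ω]:
    [U_i(t̄)^T Ω U_i(t) = Ω'], where [Ω'] is [Ω] with the diagonal entries of
    the two crossing strands exchanged; this is a 2x2 block computation. The
    relation for [U_i^{-1}] follows from the one for [U_i] at the swapped
    strands by inverting both sides. Chaining these relations along the word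
    gives [Ω(τ) = Γ̄^T Ω(ι) Γ], and [Γ] is invertible. *)

Ltac split_nat_tests := repeat (match goal with
  | |- context [(?x == ?y :> nat)] =>
     (have -> : (x == y) = true by (apply/idP; lia)) ||
     (have -> : (x == y) = false by (apply/negbTE/negP; lia)) ||
     (let hb := fresh "hb" in case: (boolP (x == y)) => hb; try (exfalso; lia))
  | |- context [(?x < ?y)%N] =>
     (have -> : (x < y)%N = true by (apply/idP; lia)) ||
     (have -> : (x < y)%N = false by (apply/negbTE/negP; lia)) ||
     (let hb := fresh "hb" in case: (boolP (x < y)%N) => hb; try (exfalso; lia))
  end; rewrite /= ?mulr0n ?mulr1n ?mulr0 ?mulr1).

Section Block2.
Variables (F : fieldType) (n : nat).

Definition block2mx (i : nat) (a b c d : F) : 'M[F]_n :=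
  \matrix_(r, k)
    if (r.+1 == i) && (k.+1 == i) then a
    else if (r.+1 == i) && (k.+1 == i.+1) then b
    else if (r.+1 == i.+1) && (k.+1 == i) then c
    else if (r.+1 == i.+1) && (k.+1 == i.+1) then d
    else (r == k)%:R.

Lemma Umx_block2 i x : Umx n i x = block2mx i (1 - x) 1 x 0.
Proof. by []. Qed.

Lemma Uinvmx_block2 i x : Uinvmx n i x = block2mx i 0 x^-1 1 (1 - x^-1).
Proof. by []. Qed.

Lemma trmx_block2 i a b c d : (block2mx i a b c d)^T = block2mx i a c b d.
Proof.
by apply/matrixP => r k; rewrite !mxE -!(inj_eq val_inj) /=; split_nat_tests.
Qed.

Section BlockProducts.
Variables (i : nat) (P Q : 'I_n) (hP : P.+1 = i) (hQ : Q.+1 = i.+1).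

Lemma mulmx_block2 a b c d (M : 'M[F]_n) r k :
  (M *m block2mx i a b c d) r k =
  if k.+1 == i then M r P * a + M r Q * c
  else if k.+1 == i.+1 then M r P * b + M r Q * d else M r k.
Proof.
have QP : Q != P by rewrite -(inj_eq val_inj); apply/negP => /= /eqP; lia.
rewrite mxE; case: ifP => hk1; last case: ifP => hk2.
1,2: rewrite (bigD1 P) // (bigD1 Q) //= big1 ?addr0;
  [ by rewrite !mxE; split_nat_tests
  | by move=> j; rewrite !mxE -!(inj_eq val_inj) /= => /andP[jQ jP];
       split_nat_tests ].
rewrite (bigD1 k) //= big1 ?addr0 => [|j]; rewrite !mxE -?(inj_eq val_inj) /=.
  by rewrite eqxx; split_nat_tests.
by move=> jk; split_nat_tests.
Qed.

Lemma block2_mulmx a b c d (M : 'M[F]_n) r k :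
  (block2mx i a b c d *m M) r k =
  if r.+1 == i then a * M P k + b * M Q k
  else if r.+1 == i.+1 then c * M P k + d * M Q k else M r k.
Proof.
rewrite -[block2mx _ _ _ _ _ *m M]trmxK trmx_mul trmx_block2 mxE mulmx_block2.
rewrite !mxE; case: ifP => _; [|case: ifP => _]; rewrite ?mxE //.
all: by congr (_ + _); apply: mulrC.
Qed.

End BlockProducts.
End Block2.

Section GassnerUnitarity.
Variables (F : fieldType) (n : nat) (t : nat -> F).

Lemma Umx_mulmx_Uinvmx i (x : F) : (0 < i < n)%N -> x != 0 ->
  Umx n i x *m Uinvmx n i x = 1%:M.
Proof.
case: i => [//|p] /andP[_ hp] x0.
have hp' : (p < n)%N by lia.
have hP : (Ordinal hp').+1 = p.+1 by []; have hQ : (Ordinal hp).+1 = p.+2 by [].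
apply/matrixP => r c.
rewrite Umx_block2 Uinvmx_block2 (mulmx_block2 hP hQ).
rewrite !mxE -!(inj_eq val_inj) /=; split_nat_tests.
all: try (move: hb; rewrite ?eqSS => /eqP hb; subst); rewrite ?hQ //.
all: by field.
Qed.

Lemma Omega_Umx st i : (0 < i < n)%N ->
  t (st i) != 0 -> t (st i) != 1 -> t (st i.+1) != 1 ->
  (Umx n i (t (st i))^-1)^T *m Omega n t st *m Umx n i (t (st i))
  = Omega n t (swap_pos st i).
Proof.
case: i => [//|p] /andP[_ hp] x0 x1 y1.
have hp' : (p < n)%N by lia.
have hP : (Ordinal hp').+1 = p.+1 by []; have hQ : (Ordinal hp).+1 = p.+2 by [].
have x1' : 1 - t (st p.+1) != 0 by rewrite subr_eq0 eq_sym.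
have y1' : 1 - t (st p.+2) != 0 by rewrite subr_eq0 eq_sym.
apply/matrixP => r c.
rewrite Umx_block2 trmx_block2 (mulmx_block2 hP hQ) !(block2_mulmx hP hQ).
rewrite !mxE -!(inj_eq val_inj) /swap_pos /=; split_nat_tests.
all: try (move: hb; rewrite ?eqSS => /eqP hb; subst); rewrite ?hQ //.
all: by field; rewrite ?x0 ?x1' ?y1'.
Qed.

Lemma swap_posK st i : swap_pos (swap_pos st i) i =1 st.
Proof. by move=> p; rewrite /swap_pos; case: eqVneq => [->|_]; rewrite ?eqxx;
  case: eqVneq => [->|] //; rewrite ?(gtn_eqF (ltnSn i)) ?eqxx. Qed.

Lemma eq_Omega st st' : st =1 st' -> Omega n t st = Omega n t st'.
Proof. by move=> e; apply/matrixP => r c; rewrite !mxE e. Qed.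

Lemma Omega_Uinvmx st i : (0 < i < n)%N ->
  t (st i.+1) != 0 -> t (st i.+1) != 1 -> t (st i) != 1 ->
  (Uinvmx n i (t (st i.+1))^-1)^T *m Omega n t st *m Uinvmx n i (t (st i.+1))
  = Omega n t (swap_pos st i).
Proof.
move=> hi y0 y1 x1; set st' := swap_pos st i.
have st'i : st' i = st i.+1 by rewrite /st' /swap_pos eqxx.
have st'i1 : st' i.+1 = st i by rewrite /st' /swap_pos (gtn_eqF (ltnSn i)) eqxx.
rewrite -(eq_Omega (swap_posK st i)) -/st' -Omega_Umx ?st'i ?st'i1 //.
rewrite !mulmxA -trmx_mul Umx_mulmx_Uinvmx ?invr_eq0 // trmx1 mul1mx.
by rewrite -mulmxA Umx_mulmx_Uinvmx // mulmx1.
Qed.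
End GassnerUnitarity.

Definition strands_in_range (n : nat) (st : nat -> nat) :=
  forall p, (0 < p <= n)%N -> (0 < st p <= n)%N.

Lemma strands_in_range_swap n st i : strands_in_range n st -> (0 < i < n)%N ->
  strands_in_range n (swap_pos st i).
Proof.
move=> h /andP[i0 i_n] p hp; rewrite /swap_pos.
by case: eqP => _; [|case: eqP => _]; apply: h; lia.
Qed.

Section GassnerWord.
Variables (F : fieldType) (n : nat) (t : nat -> F).
Hypothesis ht : forall j : nat, (0 < j <= n)%N -> t j != 0 /\ t j != 1.

Lemma Omega_induced_perm_aux w st : strands_in_range n st -> valid_word n w ->
  Omega n t (induced_perm_aux st w) =
  (gassner_aux n (fun j => (t j)^-1) st w)^T *m Omega n t st *m gassner_aux n t st w.
Proof.
elim: w st => [|[i s] w IHw] st hst /=; first by rewrite trmx1 mul1mx mulmx1.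
case/andP=> /= hi hw; rewrite IHw //; last exact: strands_in_range_swap.
have [x0 x1] : t (st i) != 0 /\ t (st i) != 1 by apply/ht/hst; lia.
have [y0 y1] : t (st i.+1) != 0 /\ t (st i.+1) != 1 by apply/ht/hst; lia.
rewrite trmx_mul -!mulmxA; congr (_ *m _); rewrite !mulmxA; congr (_ *m _).
by case: s; [rewrite Omega_Umx | rewrite Omega_Uinvmx].
Qed.

Lemma gassner_aux_unit w st : strands_in_range n st -> valid_word n w ->
  gassner_aux n t st w \in unitmx.
Proof.
elim: w st => [|[i s] w IHw] st hst /=; first by rewrite unitmx1.
case/andP=> /= hi hw; rewrite unitmx_mul IHw ?andbT //; last exact: strands_in_range_swap.
have [x0 _] : t (st i) != 0 /\ t (st i) != 1 by apply/ht/hst; lia.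
have [y0 _] : t (st i.+1) != 0 /\ t (st i.+1) != 1 by apply/ht/hst; lia.
by case: s; [have [] := mulmx1_unit (Umx_mulmx_Uinvmx hi x0)
            | have [] := mulmx1_unit (Umx_mulmx_Uinvmx hi y0)].
Qed.
End GassnerWord.

Unset Implicit Arguments. Set Strict Implicit.

Theorem mainTheorem1 (F : fieldType) (n : nat) (hn : (0 < n)%N)
  (t : nat -> F)
  (ht : forall j : nat, (0 < j <= n)%N -> t j != 0 /\ t j != 1)
  (w : braid_word) (hw : valid_word n w) :
  Omega n t (induced_perm w) *m invmx (gassner n t w)
  = (gassner n (fun j => (t j)^-1) w)^T *m Omega n t id.
Proof.
have id_in_range : strands_in_range n id by [].
rewrite /induced_perm /gassner (Omega_induced_perm_aux ht id_in_range hw).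
by rewrite -mulmxA mulmxV ?mulmx1 // gassner_aux_unit.
Qed.
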